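(* Let $\alpha,\beta$ be reals with $2>\alpha>\beta\geq1$ and let $\ell_0=\ell_0(\alpha,\beta)$. Let $\mathcal{F}$ be a family of bipartite graphs such that there are constants $\rho>0$ and $C$ with $z(m,n,\mathcal{F})\leq \rho m n^{\alpha-1}+Cn^{\beta}$ for all positive integers $m\leq n$. For every real $\delta>0$ there is a real $\mu'>0$ depending only on $\alpha,\beta,\rho,\delta$ such that for all sufficiently large $n$ the following holds. Let $G$ be an $\mathcal{F}$-free bipartite graph with at most $n$ vertices and minimum degree at least $\delta n^{\alpha-1}$, and let $u\in V(G)$. Then there exist a set $S\subseteq V(G)$ with $|S|\geq \mu' n$ and a family $\mathcal{P}=\{P_v: v\in S\}$, where each $P_v$ is a path from $u$ to $v$ of length at most $\ell_0$, such that no vertex other than $u$ lies on more than $n/\log n$ of the paths in $\mathcal{P}$.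
   Context: $z(m,n,\mathcal{F})$ is the maximum number of edges in an $\mathcal{F}$-free bipartite graph with parts of sizes $m$ and $n$ ($\mathcal{F}$-free: containing no member of $\mathcal{F}$ as a subgraph). For reals $2>\alpha>\beta\geq1$, define $\ell_0(\alpha,\beta)=\left\lfloor \log_{\beta}\frac{(2-\beta)(\alpha-1)}{\alpha-\beta}\right\rfloor+2$ if $\beta>1$, and $\ell_0(\alpha,\beta)=\lfloor 1/(\alpha-1)\rfloor+1$ if $\beta=1$. *)

From Stdlib Require Import Reals ZArith ClassicalEpsilon.
From mathcomp Require Import all_boot.
Set Implicit Arguments. Unset Strict Implicit. Unset Printing Implicit Defensive.

Definition simple_graph (V : finType) (G : rel V) : Prop :=
  (forall x y, G x y = G y x) /\ (forall x, G x x = false).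

Definition bipartite_graph (V : finType) (G : rel V) : Prop :=
  simple_graph G /\ exists c : V -> bool, forall x y, G x y -> c x != c y.

Definition graph_family := forall k : nat, rel 'I_k -> Prop.

Definition subgraph_of (k : nat) (H : rel 'I_k) (V : finType) (G : rel V) : Prop :=
  exists f : 'I_k -> V, injective f /\ forall x y, H x y -> G (f x) (f y).

Definition F_free (F : graph_family) (V : finType) (G : rel V) : Prop :=
  ~ exists k (H : rel 'I_k), F k H /\ subgraph_of H G.

Definition bip_graph (m n : nat) (E : {set 'I_m * 'I_n}) : rel ('I_m + 'I_n) :=
  fun x y => match x, y with
             | inl i, inr j => (i, j) \in E
             | inr j, inl i => (i, j) \in E
             | _, _ => false
             end.

Definition pbool (P : Prop) : bool :=
  if excluded_middle_informative P then true else false.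

Definition zarank (m n : nat) (F : graph_family) : nat :=
  \max_(E : {set 'I_m * 'I_n} | pbool (F_free F (bip_graph E))) #|E|.

Definition Rfloor (x : R) : Z := (up x - 1)%Z.

Definition ell0 (alpha beta : R) : Z :=
  if Rlt_dec 1 beta then
    (Rfloor (ln ((2 - beta) * (alpha - 1) / (alpha - beta)) / ln beta) + 2)%Z
  else (Rfloor (1 / (alpha - 1)) + 1)%Z.

(* p is a path in G from u to v (vertex list u :: p, no repeated vertices);
   its length (number of edges) is size p. *)
Definition is_path_from_to (V : finType) (G : rel V) (u v : V) (p : seq V) : Prop :=
  path G u p /\ last u p = v /\ uniq (u :: p).

From Stdlib Require Import Reals ZArith Lra Lia ClassicalEpsilon.
From mathcomp Require Import all_boot zify.
Set Implicit Arguments. Unset Strict Implicit. Unset Printing Implicit Defensive.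

(* Grow a breadth-first tree from [u] in [k.+1 <= ell0] layers of sizes about
   [n ^ e 1 < ... < n ^ e k < mu n], each vertex adopting at most [K] children
   in the next layer.  A layer can always be grown: otherwise more than half of
   it, [U], has few new neighbours, and the bipartite graph between [U] and its
   neighbourhood, which has [|U| * mindeg] edges but two small sides, would
   violate the Zarankiewicz bound [rho m T ^ (alpha - 1) + C T ^ beta].  The
   condition [beta * e i.+1 < e i + alpha - 1] that keeps the [C T ^ beta] term
   negligible is what limits the number of layers to [ell0].  The number of
   paths through a vertex grows by the factor [K ~ 2 |layer i.+1| / |layer i|]
   per layer, so stays below [4 ^ ell0 * mu n / n ^ e 1 <= n / ln n]. *)


Local Open Scope R_scope.

Lemma Rfloor_Zfloor x : Rfloor x = Zfloor x.
Proof. by rewrite /Rfloor up_Zfloor; lia. Qed.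

Lemma INR_Z_to_nat z : (0 <= z)%Z -> INR (Z.to_nat z) = IZR z.
Proof. by move=> z0; rewrite INR_IZR_INZ Z2Nat.id. Qed.

Lemma INR_leq (a b : nat) : (a <= b)%N -> INR a <= INR b.
Proof. by move/leP; apply: le_INR. Qed.

Lemma INR_expn m j : INR (m ^ j) = INR m ^ j.
Proof. by elim: j => // j IH; rewrite expnS mult_INR IH. Qed.

Lemma Rpower_pos x a : 0 < Rpower x a.
Proof. exact: exp_pos. Qed.

Lemma Rpower_ge1 x a : 1 <= x -> 0 <= a -> 1 <= Rpower x a.
Proof. by move=> x1 a0; rewrite -(Rpower_O x); [apply: Rle_Rpower|lra]. Qed.

Lemma exp_le x y : x <= y -> exp x <= exp y.
Proof. by case/Rle_lt_or_eq_dec => [/exp_increasing/Rlt_le|->] //; apply: Rle_refl. Qed.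

Lemma ln_lt_self y : 0 < y -> ln y < y.
Proof.
move=> y0; rewrite -{2}(ln_exp y); apply: ln_increasing => //.
by have := exp_ineq1_le y; lra.
Qed.

Definition up_nat (x : R) : nat := Z.to_nat (up x).

Lemma up_nat_spec x : 0 <= x -> x < INR (up_nat x) <= x + 1.
Proof.
move=> x0; have [x_lt_up up_le] := archimed x.
have up0 : (0 <= up x)%Z by apply: le_IZR; lra.
by rewrite /up_nat INR_Z_to_nat //; lra.
Qed.

Lemma up_nat_gt0 x : 0 <= x -> (0 < up_nat x)%N.
Proof.
move=> x0; have [x_lt _] := up_nat_spec x0.
by apply/ltP; apply: INR_lt; rewrite INR_0; lra.
Qed.

(* Layer [i] of the tree will have about [n ^ e i] vertices. *)
Definition exponent_chain (alpha beta : R) (k : nat) (e : nat -> R) : Prop :=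
  [/\ 0 < e 1%N, e 1%N < alpha - 1,
      forall i, (1 <= i)%N -> (i < k)%N ->
        e i < e i.+1 /\ beta * e i.+1 < e i + alpha - 1,
      e k < 1 & beta < e k + alpha - 1].

(* A chain meeting the recurrence with equality and [2 - alpha < ebar k <= 1]
   is turned into a strict one by subtracting a small multiple of the index. *)
Lemma exponent_chain_perturb alpha beta k (ebar : nat -> R) g :
  1 <= beta -> 0 < alpha - 1 -> (1 <= k)%N -> 0 < g -> ebar 1%N = alpha - 1 ->
  (forall i, (1 <= i)%N -> (i < k)%N ->
     ebar i + g <= ebar i.+1 /\ beta * ebar i.+1 = ebar i + alpha - 1) ->
  beta - alpha + 1 < ebar k -> ebar k <= 1 ->
  exists e, exponent_chain alpha beta k e.
Proof.
move=> b1 a1 k1 g0 e1 Hrec ek_lo ek_hi.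
have k0 : 0 < INR k by apply: lt_0_INR; apply/ltP.
pose gap := ebar k - (beta - alpha + 1).
pose eta := Rmin ((alpha - 1) / 2) (Rmin (g / 2) (gap / (2 * INR k))).
have eta0 : 0 < eta by repeat apply: Rmin_pos; apply: Rdiv_lt_0_compat; rewrite /gap; lra.
have eta_a : eta <= (alpha - 1) / 2 := Rmin_l _ _.
have eta_g : eta <= g / 2 by apply: Rle_trans (Rmin_r _ _) (Rmin_l _ _).
have eta_k : eta * INR k <= gap / 2.
  have : eta <= gap / (2 * INR k) by apply: Rle_trans (Rmin_r _ _) (Rmin_r _ _).
  move/(Rmult_le_compat_r (INR k) _ _ (Rlt_le _ _ k0)).
  by rewrite (_ : gap / (2 * INR k) * INR k = gap / 2) //; field; lra.
have etak0 : 0 < eta * INR k by apply: Rmult_lt_0_compat.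
rewrite /gap in eta_k.
exists (fun i => ebar i - eta * INR i); split; rewrite ?e1 ?INR_1; try lra.
- move=> i i1 ik; have [gi ri] := Hrec i i1 ik; rewrite S_INR.
  have i0 := pos_INR i.
  have : 0 <= (beta - 1) * (eta * (INR i + 1)) by apply: Rmult_le_pos; nra.
  split; nra.
Qed.

Lemma exponent_chain_beta1 alpha : 1 < alpha < 2 ->
  exists k, (1 <= k)%N /\ (Z.of_nat k.+1 <= ell0 alpha 1)%Z /\
            exists e, exponent_chain alpha 1 k e.
Proof.
move=> [a1 a2]; rewrite /ell0; case: Rlt_dec => [/Rlt_irrefl//|_] /=.
rewrite Rfloor_Zfloor; set x := 1 / (alpha - 1).
have x1 : 1 < x.
  by rewrite /x /Rdiv Rmult_1_l -Rinv_1; apply: Rinv_lt_contravar; lra.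
have [fl_le lt_fl] := Zfloor_bound x.
have z1 : (1 <= Zfloor x)%Z by apply: Zfloor_lub; lra.
exists (Z.to_nat (Zfloor x)); split; first lia.
split; first lia.
have Hk : INR (Z.to_nat (Zfloor x)) = IZR (Zfloor x) by apply: INR_Z_to_nat; lia.
have a10 : 0 < alpha - 1 by lra.
have xa : x * (alpha - 1) = 1 by rewrite /x; field; lra.
apply: (@exponent_chain_perturb _ _ _ (fun i => INR i * (alpha - 1)) (alpha - 1));
  rewrite ?INR_1 ?Hk; try lra; first lia.
- by move=> i _ _; rewrite S_INR; split; [apply: Req_le|]; ring.
- by have := Rmult_lt_compat_r _ _ _ a10 lt_fl; lra.
- by have := Rmult_le_compat_r _ _ _ (Rlt_le _ _ a10) fl_le; lra.
Qed.

Lemma pow_floor_log_bounds beta r : 1 < beta -> 1 <= r ->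
  exists q, [/\ beta ^ q <= r, r < beta ^ q.+1 & Z.of_nat q = Zfloor (ln r / ln beta)].
Proof.
move=> b1 r1.
have lnb : 0 < ln beta by rewrite -ln_1; apply: ln_increasing; lra.
have lnr : 0 <= ln r.
  by case: (Rle_lt_or_eq_dec _ _ r1) => [/(ln_increasing _ _ Rlt_0_1)|<-];
     rewrite ln_1; lra.
set L := ln r / ln beta.
have L0 : 0 <= L by apply: Rmult_le_pos => //; apply: Rlt_le; apply: Rinv_0_lt_compat.
have Lln : L * ln beta = ln r by rewrite /L; field; lra.
have [fl_le lt_fl] := Zfloor_bound L.
have z0 : (0 <= Zfloor L)%Z by apply: Zfloor_lub.
have pow_exp m : beta ^ m = exp (INR m * ln beta) by rewrite -Rpower_pow; [|lra].
exists (Z.to_nat (Zfloor L)); split; last by rewrite Z2Nat.id.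
all: rewrite pow_exp -(exp_ln r) ?S_INR ?INR_Z_to_nat //; try lra.
  by apply: exp_le; rewrite -Lln; apply: Rmult_le_compat_r; lra.
by apply: exp_increasing; rewrite -Lln; apply: Rmult_lt_compat_r; lra.
Qed.

Lemma exponent_chain_beta_gt1 alpha beta : 1 < beta -> beta < alpha -> alpha < 2 ->
  exists k, (1 <= k)%N /\ (Z.of_nat k.+1 <= ell0 alpha beta)%Z /\
            exists e, exponent_chain alpha beta k e.
Proof.
move=> b1 ba a2; rewrite /ell0; case: Rlt_dec => [_|//] /=.
rewrite Rfloor_Zfloor.
set w := (2 - beta) * (alpha - 1); set r := w / (alpha - beta).
have w0 : 0 < w by rewrite /w; nra.
have r1 : 1 <= r.
  by rewrite /r -(Rdiv_diag (alpha - beta)); [apply: Rmult_le_compat_r;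
    [apply: Rlt_le; apply: Rinv_0_lt_compat|rewrite /w]; nra|lra].
have [q [pow_lo pow_hi q_eq]] := pow_floor_log_bounds b1 r1.
exists q.+1; split; first lia; split; first lia.
have pow_pos m : 0 < beta ^ m by apply: pow_lt; lra.
have Hw : w = r * (alpha - beta) by rewrite /r; field; lra.
(* [ebar] solves [beta * ebar i.+1 = ebar i + alpha - 1] from [ebar 1 = alpha - 1];
   its increments are [w / beta ^ i], and [beta ^ q <= r < beta ^ q.+1] places
   [ebar q.+1] in [(2 - alpha, 1]]. *)
pose ebar i := (alpha - 1 - w / beta ^ i.-1) / (beta - 1).
apply: (@exponent_chain_perturb _ _ _ ebar (w / beta ^ q.+1)) => //; try lra.
- by apply: Rdiv_lt_0_compat.
- by rewrite /ebar /= /w; field; lra.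
- move=> [|j] // _ jq.
  have bj := pow_pos j.
  have gap : ebar j.+2 - ebar j.+1 = w / (beta * beta ^ j).
    by rewrite /ebar /=; field; repeat split; lra.
  split; last by rewrite /ebar /=; field; repeat split; lra.
  suff : w / beta ^ q.+1 <= w / (beta * beta ^ j) by lra.
  apply: Rmult_le_compat_l; first lra.
  apply: Rinv_le_contravar; first nra.
  by change (beta ^ j.+1 <= beta ^ q.+1); apply: Rle_pow; [lra|apply/leP; lia].
- have bq := pow_pos q.
  have hw : w / beta ^ q < beta * (alpha - beta).
    apply: (Rmult_lt_reg_r (beta ^ q)) => //.
    rewrite /Rdiv Rmult_assoc Rinv_l; last lra.
    by change (beta ^ q.+1) with (beta * beta ^ q) in pow_hi; nra.
  rewrite /ebar /=; apply: (Rmult_lt_reg_r (beta - 1)); first lra.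
  by rewrite /Rdiv Rmult_assoc Rinv_l; nra.
- have bq := pow_pos q.
  have hw : alpha - beta <= w / beta ^ q.
    apply: (Rmult_le_reg_r (beta ^ q)) => //.
    by rewrite /Rdiv Rmult_assoc Rinv_l; nra.
  rewrite /ebar /=; apply: (Rmult_le_reg_r (beta - 1)); first lra.
  by rewrite /Rdiv Rmult_assoc Rinv_l; nra.
Qed.

Lemma exponent_chain_exists alpha beta : 1 <= beta -> beta < alpha -> alpha < 2 ->
  exists k, (1 <= k)%N /\ (Z.of_nat k.+1 <= ell0 alpha beta)%Z /\
            exists e, exponent_chain alpha beta k e.
Proof.
move=> b1 ba a2; case: (Rle_lt_or_eq_dec _ _ b1) => [b1'|b_eq].
  exact: exponent_chain_beta_gt1.
by rewrite -b_eq in ba *; apply: exponent_chain_beta1.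
Qed.

Definition eventually (P : nat -> Prop) := exists N, forall n, (N <= n)%N -> P n.

Lemma eventually_and {P Q : nat -> Prop} :
  eventually P -> eventually Q -> eventually (fun n => P n /\ Q n).
Proof.
by move=> [N1 H1] [N2 H2]; exists (maxn N1 N2) => n Hn; split; [apply: H1|apply: H2]; lia.
Qed.

Lemma eventually_impl {P Q : nat -> Prop} :
  eventually P -> (forall n, P n -> Q n) -> eventually Q.
Proof. by move=> [N H] PQ; exists N => n /H /PQ. Qed.

Lemma eventually_forall_ltn m (P : nat -> nat -> Prop) :
  (forall i, (i < m)%N -> eventually (P i)) ->
  eventually (fun n => forall i, (i < m)%N -> P i n).
Proof.
elim: m => [|m IH] H; first by exists 0%N.
have [N1 H1] := IH (fun i im => H i (leqW im)).
have [N2 H2] := H m (ltnSn m).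
exists (maxn N1 N2) => n Hn i; rewrite ltnS leq_eqVlt => /orP[/eqP->|im].
  by apply: H2; lia.
by apply: H1 => //; lia.
Qed.

Lemma eventually_ge_INR c : eventually (fun n => c <= INR n).
Proof.
have [up_gt _] := archimed c.
exists (Z.to_nat (up c)) => n /INR_leq Hn.
suff : IZR (up c) <= INR (Z.to_nat (up c)) by lra.
by rewrite INR_IZR_INZ; apply: IZR_le; lia.
Qed.

Lemma eventually_Rpower_lt a b A B : a < b -> 0 < B ->
  eventually (fun n => A * Rpower (INR n) a <= B * Rpower (INR n) b).
Proof.
move=> ab B0; pose M := Rpower (Rmax 1 (A / B)) (/ (b - a)).
refine (eventually_impl (eventually_and (eventually_ge_INR 1) (eventually_ge_INR M)) _).
move=> n [n1 nM].
have AB1 : 1 <= Rmax 1 (A / B) := Rmax_l _ _.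
have AB : A / B <= Rpower (INR n) (b - a).
  apply: Rle_trans (Rmax_r 1 _) _.
  have -> : Rmax 1 (A / B) = Rpower M (b - a).
    by rewrite /M Rpower_mult Rinv_l ?Rpower_1 //; lra.
  by apply: Rle_Rpower_l; [lra|split; [apply: Rpower_pos|]].
have nb : Rpower (INR n) b = Rpower (INR n) (b - a) * Rpower (INR n) a.
  by rewrite -Rpower_plus; congr Rpower; ring.
have na := Rpower_pos (INR n) a.
have : A <= B * Rpower (INR n) (b - a).
  have -> : A = B * (A / B) by field; lra.
  by apply: Rmult_le_compat_l; lra.
rewrite nb; nra.
Qed.

Lemma eventually_ln_le_Rpower e A : 0 < e ->
  eventually (fun n => A * ln (INR n) <= Rpower (INR n) e).
Proof.
move=> e0; have e2 : 0 < 2 / e by apply: Rdiv_lt_0_compat; lra.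
refine (eventually_impl (eventually_and (eventually_ge_INR 1)
  (@eventually_Rpower_lt (e / 2) e (Rmax A 0 * (2 / e)) 1 ltac:(lra) Rlt_0_1)) _).
move=> n [n1 H].
have ln0 : 0 <= ln (INR n).
  by case: (Rle_lt_or_eq_dec _ _ n1) => [/(ln_increasing _ _ Rlt_0_1)|<-]; rewrite ln_1; lra.
have ln_half : ln (INR n) = 2 / e * ln (Rpower (INR n) (e / 2)) by rewrite ln_Rpower; field; lra.
rewrite ln_half in ln0 *; set p := Rpower (INR n) (e / 2) in H ln0 *; set L := ln p in ln0 *.
have Lp : L < p by apply: ln_lt_self; apply: Rpower_pos.
have h1 : A * (2 / e * L) <= Rmax A 0 * (2 / e * L).
  by apply: Rmult_le_compat_r => //; apply: Rmax_l.
have h2 : Rmax A 0 * (2 / e * L) <= Rmax A 0 * (2 / e) * p.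
  by rewrite -Rmult_assoc; apply: Rmult_le_compat_l; [apply: Rmult_le_pos; [apply: Rmax_r|lra]|lra].
lra.
Qed.

Local Close Scope R_scope.

Section Neighbourhoods.
Variables (V : finType) (G : rel V).

Definition nbr (U : {set V}) : {set V} := [set w | [exists x in U, G x w]].
Definition deg (x : V) : nat := #|[set w | G x w]|.
Definition edge_count (X Y : {set V}) : nat :=
  #|[set p : V * V | [&& p.1 \in X, p.2 \in Y & G p.1 p.2]]|.

Lemma edge_count_nbr (U : {set V}) : edge_count U (nbr U) = \sum_(x in U) deg x.
Proof.
rewrite /edge_count -sum1_card.
rewrite (partition_big (fun p : V * V => p.1) (fun x => x \in U)) => [|[x y]]; last first.
  by rewrite inE => /andP[].
apply: eq_bigr => x xU; rewrite /deg -sum1_card.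
rewrite (reindex (fun w => (x, w))) /=; last first.
  by exists snd => [//|[x' w]]; rewrite !inE /= => /andP[_ /eqP ->].
apply: eq_bigl => w; rewrite !inE /= eqxx andbT xU /=.
by case Gxw: (G x w); rewrite ?andbF //= andbT; apply/existsP; exists x; rewrite xU.
Qed.

Lemma edge_count0l (Y : {set V}) : edge_count set0 Y = 0.
Proof. by apply/eqP; rewrite cards_eq0; apply/eqP/setP => p; rewrite !inE. Qed.

Lemma deg_le_card_nbr (U : {set V}) x : x \in U -> deg x <= #|nbr U|.
Proof.
move=> xU; apply/subset_leq_card/subsetP => w; rewrite !inE => Gxw.
by apply/existsP; exists x; rewrite xU.
Qed.

Lemma nbr_disjoint (col : V -> bool) b (U : {set V}) :
  (forall x y, G x y -> col x != col y) -> (forall x, x \in U -> col x = b) ->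
  [disjoint U & nbr U].
Proof.
move=> Gcol Ucol; rewrite disjoint_subset; apply/subsetP => x xU; rewrite !inE.
apply/existsP => -[y /andP[yU Gyx]].
by move: (Gcol _ _ Gyx); rewrite (Ucol _ xU) (Ucol _ yU) eqxx.
Qed.

Hypothesis Gsym : symmetric G.

Lemma edge_countC X Y : edge_count X Y = edge_count Y X.
Proof.
suff le XX YY : (edge_count XX YY <= edge_count YY XX)%N by apply/eqP; rewrite eqn_leq !le.
apply: (leq_trans _ (leq_imset_card (fun p : V * V => (p.2, p.1)) _)).
apply/subset_leq_card/subsetP => -[x y]; rewrite inE /= => /and3P[xX yY Gxy].
by apply/imsetP; exists (y, x); rewrite // inE /= yY xX Gsym.
Qed.

Lemma edge_count_le_zarank (F : graph_family) (X Y : {set V}) :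
  F_free F G -> [disjoint X & Y] -> (edge_count X Y <= zarank #|X| #|Y| F)%N.
Proof.
move=> Gfree dXY.
pose E : {set 'I_#|X| * 'I_#|Y|} := [set p | G (enum_val p.1) (enum_val p.2)].
apply: (@leq_trans #|[set (enum_val p.1, enum_val p.2) | p in E]|).
  apply/subset_leq_card/subsetP => -[x y]; rewrite inE /= => /and3P[xX yY Gxy].
  apply/imsetP; exists (enum_rank_in xX x, enum_rank_in yY y).
    by rewrite inE /= !(enum_rankK_in xX xX) ?(enum_rankK_in yY yY).
  by rewrite /= (enum_rankK_in xX xX) (enum_rankK_in yY yY).
apply: (leq_trans (leq_imset_card _ _)).
apply: (@leq_bigmax_cond _ (fun E => pbool (F_free F (bip_graph E))) (fun E => #|E|) E).
rewrite /pbool; case: excluded_middle_informative => // nfree; exfalso; apply: nfree.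
move=> [k [H [HF [f [finj fedge]]]]]; apply: Gfree.
pose g (s : 'I_#|X| + 'I_#|Y|) : V := match s with inl i => enum_val i | inr j => enum_val j end.
have g_inj : injective g.
  move=> [i|j] [i'|j'] /= eq; rewrite ?(enum_val_inj eq) //; exfalso.
    by have := enum_valP j'; rewrite -eq (disjointFr dXY (enum_valP i)).
  by have := enum_valP j; rewrite eq (disjointFr dXY (enum_valP i')).
exists k, H; split => //; exists (g \o f); split => [|a b /fedge]; first exact: inj_comp.
rewrite /g /bip_graph /=.
by case: (f a) => [i|j]; case: (f b) => [i'|j'] //; rewrite inE // Gsym.
Qed.

End Neighbourhoods.

Local Open Scope R_scope.

Lemma zarankiewicz_bound_mono rho C a b (m M y T : R) :
  0 <= rho -> 0 <= a -> 0 <= b -> 0 <= m <= M -> 0 < y <= T ->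
  rho * m * Rpower y a + C * Rpower y b <= rho * M * Rpower T a + Rmax C 0 * Rpower T b.
Proof.
move=> rho0 a0 b0 [m0 mM] yT.
have ya := Rle_Rpower_l _ _ _ a0 yT; have yb := Rle_Rpower_l _ _ _ b0 yT.
have ypos := Rpower_pos y b.
apply: Rplus_le_compat.
  by rewrite !Rmult_assoc; apply: Rmult_le_compat_l => //;
     apply: Rmult_le_compat => //; apply: Rlt_le; apply: Rpower_pos.
apply: Rle_trans (_ : Rmax C 0 * Rpower y b <= _).
  by apply: Rmult_le_compat_r; [lra|apply: Rmax_l].
by apply: Rmult_le_compat_l => //; apply: Rmax_r.
Qed.

Section ZarankiewiczDegreeSum.
Variables (F : graph_family) (rho C a b : R).
Hypotheses (rho0 : 0 <= rho) (a0 : 0 <= a) (b0 : 0 <= b).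
Hypothesis zarank_le : forall m n : nat, (0 < m)%N -> (m <= n)%N ->
  INR (zarank m n F) <= rho * INR m * Rpower (INR n) a + C * Rpower (INR n) b.
Variables (V : finType) (G : rel V).
Hypotheses (Gsym : symmetric G) (Gfree : F_free F G).

Lemma sum_deg_le_zarankiewicz (U : {set V}) T :
  [disjoint U & nbr G U] -> INR #|U| <= T -> INR #|nbr G U| <= T ->
  INR (\sum_(x in U) deg G x) <= rho * INR #|U| * Rpower T a + Rmax C 0 * Rpower T b.
Proof.
move=> dis UT NT; rewrite -edge_count_nbr.
have rhs0 : 0 <= rho * INR #|U| * Rpower T a + Rmax C 0 * Rpower T b.
  apply: Rplus_le_le_0_compat; repeat apply: Rmult_le_pos => //;
    by [apply: pos_INR | apply: Rlt_le; apply: Rpower_pos | apply: Rmax_r].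
case: (posnP #|U|) => [/cards0_eq U0 | U0].
  by rewrite {1}U0 edge_count0l; exact: rhs0.
case: (posnP #|nbr G U|) => [/cards0_eq -> | N0].
  by rewrite edge_countC // edge_count0l; exact: rhs0.
have U0R : 0 < INR #|U| by apply: lt_0_INR; apply/ltP.
have N0R : 0 < INR #|nbr G U| by apply: lt_0_INR; apply/ltP.
have [UN|NU] := leqP #|U| #|nbr G U|.
  apply: Rle_trans (INR_leq (edge_count_le_zarank Gsym Gfree dis)) _.
  apply: Rle_trans (zarank_le U0 UN) _.
  by apply: zarankiewicz_bound_mono => //; lra.
rewrite edge_countC //.
apply: Rle_trans (INR_leq (edge_count_le_zarank Gsym Gfree _)) _; first by rewrite disjoint_sym.
apply: Rle_trans (zarank_le N0 (ltnW NU)) _.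
apply: zarankiewicz_bound_mono => //; split; try lra.
by apply: INR_leq; exact: ltnW.
Qed.

End ZarankiewiczDegreeSum.

Local Close Scope R_scope.

Section PathSystem.
Variables (V : finType) (G : rel V) (col : V -> bool) (u : V).
Hypothesis Gcol : forall x y, G x y -> col x != col y.

Definition path_system (j : nat) (Tree Last : {set V}) (P : V -> seq V) (B : nat) (b : bool) :=
  [/\ u \in Tree, Last \subset Tree,
      forall v, v \in Tree ->
        [/\ is_path_from_to G u v (P v), size (P v) <= j & {subset P v <= Tree}],
      forall v, v \in Last -> col v = b &
      forall w, w != u -> #|[set v in Last | w \in P v]| <= B].

(* [f y = Some x] makes [x] the parent of the new vertex [y]. *)
Definition parented (f : {ffun V -> option V}) := [set y | f y != None].
Definition children (f : {ffun V -> option V}) x := [set y | f y == Some x].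

Definition parent_assignment (Tree Last : {set V}) (K s : nat) (f : {ffun V -> option V}) :=
  [&& [forall y, if f y is Some x then [&& x \in Last, G x y & y \notin Tree] else true],
      [forall x, #|children f x| <= K] & #|parented f| <= s].

Lemma parent_assignmentP Tree Last K s f v x :
  parent_assignment Tree Last K s f -> f v = Some x -> [/\ x \in Last, G x v & v \notin Tree].
Proof. by case/and3P => /forallP /(_ v) + _ _ fv; rewrite fv => /and3P. Qed.

Lemma sum_card_children (f : {ffun V -> option V}) (A : {set V}) :
  \sum_(x in A) #|children f x| = #|[set y | [exists x in A, f y == Some x]]|.
Proof.
apply/esym; rewrite -sum1_card.
rewrite (partition_big (fun y => odflt u (f y)) (fun x => x \in A)); last first.
  by move=> y; rewrite inE => /existsP[x /andP[xA /eqP ->]].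
apply: eq_bigr => x xA; rewrite -sum1_card; apply: eq_bigl => y; rewrite !inE.
case fy: (f y) => [x'|] /=; last by apply/negP => /andP[/existsP[z /andP[_]]].
apply/andP/eqP => [[_ /eqP ->] // | [->]]; split => //.
by apply/existsP; exists x; rewrite xA eqxx.
Qed.

Lemma sum_card_children_le (f : {ffun V -> option V}) (A : {set V}) :
  \sum_(x in A) #|children f x| <= #|parented f|.
Proof.
rewrite sum_card_children; apply/subset_leq_card/subsetP => y.
by rewrite !inE => /existsP[x /andP[_ /eqP ->]].
Qed.

Definition expands_into (Tree Last : {set V}) (K s : nat) :=
  forall U : {set V}, U \subset Last -> K * (#|Last| - #|U|) < s -> s <= #|nbr G U :\: Tree|.

Lemma parent_assignment_extend Tree Last K s f x y :
  parent_assignment Tree Last K s f -> #|parented f| < s ->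
  x \in Last -> #|children f x| < K -> G x y -> y \notin Tree -> f y = None ->
  exists2 f', parent_assignment Tree Last K s f' & #|parented f'| = #|parented f|.+1.
Proof.
move=> /and3P[/forallP fP /forallP fK _] fs xL xK Gxy yT fy.
pose f' : {ffun V -> option V} := [ffun z => if z == y then Some x else f z].
have ydom : y \notin parented f by rewrite inE fy.
have dom' : parented f' = y |: parented f.
  by apply/setP => z; rewrite !inE ffunE; case: (z == y).
exists f'; last by rewrite dom' cardsU1 ydom.
apply/and3P; split; last by rewrite dom' cardsU1 ydom.
  by apply/forallP => z; rewrite ffunE; case: eqP => [->|_]; [rewrite xL Gxy yT|exact: fP].
apply/forallP => x0; case: (eqVneq x0 x) => [->|nx].
  rewrite (_ : children f' x = y |: children f x); first by rewrite cardsU1; lia.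
  by apply/setP => z; rewrite !inE ffunE; case: (z =P y) => [->|]; rewrite ?eqxx.
rewrite (_ : children f' x0 = children f x0); first exact: fK.
apply/setP => z; rewrite !inE ffunE; case: (z =P y) => [->|//].
by rewrite fy /=; apply/negbTE; apply: contra nx => /eqP[->].
Qed.

(* In a maximal assignment, the parents [U] with spare capacity are so many
   that [nbr G U :\: Tree] would contain an unassigned vertex to attach. *)
Lemma parent_assignment_full Tree Last K s :
  expands_into Tree Last K s ->
  exists2 f, parent_assignment Tree Last K s f & #|parented f| = s.
Proof.
move=> expand.
have f0P : parent_assignment Tree Last K s [ffun=> None].
  apply/and3P; split; first by apply/forallP => y; rewrite ffunE.
    apply/forallP => x; rewrite (_ : children _ x = set0) ?cards0 //.
    by apply/setP => y; rewrite !inE ffunE.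
  by rewrite (_ : parented _ = set0) ?cards0 //; apply/setP => y; rewrite !inE ffunE.
case: (arg_maxnP (fun f => #|parented f|) f0P) => f fP fmax.
exists f => //; apply/eqP; rewrite eqn_leq; case/and3P: (fP) => _ _ -> /=.
rewrite leqNgt; apply/negP => small.
pose U := [set x in Last | #|children f x| < K].
have sub : nbr G U :\: Tree \subset parented f.
  apply/subsetP => y; rewrite !inE => /andP[yT /existsP[x /andP[]]].
  rewrite inE => /andP[xL xK] Gxy; case fy: (f y) => [//|].
  have [f' f'P f'card] := parent_assignment_extend fP small xL xK Gxy yT fy.
  by have := fmax f' f'P; rewrite f'card; lia.
have full : K * #|Last :\: U| <= #|parented f|.
  apply: leq_trans (sum_card_children_le f (Last :\: U)).
  rewrite mulnC -sum_nat_const; apply: leq_sum => x; rewrite !inE => /andP[].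
  by rewrite negb_and => /orP[/negP//|]; rewrite -leqNgt.
have UL : U \subset Last by apply/subsetP => x; rewrite inE => /andP[].
rewrite cardsDS // in full.
by have := expand U UL ltac:(lia); have := subset_leq_card sub; lia.
Qed.

Definition extend_paths (f : {ffun V -> option V}) (P : V -> seq V) v :=
  if f v is Some x then rcons (P x) v else P v.

Lemma extend_paths_load Tree Last K s f P B w :
  parent_assignment Tree Last K s f -> #|[set v in Last | w \in P v]| <= B ->
  #|[set v in parented f | w \in extend_paths f P v]| <= K * B + 1.
Proof.
move=> fP load; have /and3P[_ /forallP fK _] := fP.
pose A := [set x in Last | w \in P x].
apply: (@leq_trans #|[set y | [exists x in A, f y == Some x]] :|: [set w]|).
  apply/subset_leq_card/subsetP => v; rewrite !inE /extend_paths.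
  case fv: (f v) => [x|] //=; rewrite mem_rcons inE => /predU1P[->|wP].
    by rewrite eqxx orbT.
  apply/orP; left; apply/existsP; exists x; rewrite eqxx andbT inE wP andbT.
  by case: (parent_assignmentP fP fv).
apply: (leq_trans (leq_card_setU _ _)); rewrite cards1 leq_add2r -sum_card_children.
apply: (@leq_trans (\sum_(x in A) K)); first by apply: leq_sum => x _; apply: fK.
by rewrite sum_nat_const mulnC leq_mul2l load orbT.
Qed.

Lemma path_system_step j Tree Last P B b K s f :
  path_system j Tree Last P B b -> parent_assignment Tree Last K s f ->
  path_system j.+1 (Tree :|: parented f) (parented f) (extend_paths f P) (K * B + 1) (~~ b)
  /\ [disjoint parented f & Tree].
Proof.
move=> [uT LT Ppath Lcol Lload] fP.
split; last first.
  rewrite disjoint_subset; apply/subsetP => y; rewrite inE.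
  by case fy: (f y) => [x|] // _; case: (parent_assignmentP fP fy).
split.
- by rewrite inE uT.
- exact: subsetUr.
- move=> v; rewrite inE /extend_paths; case fv: (f v) => [x|].
    case: (parent_assignmentP fP fv) => xL Gxv vT _.
    have [[pa [la ua]] sz sb] := Ppath x (subsetP LT x xL).
    split; first split; [|split| |].
    + by rewrite rcons_path pa la Gxv.
    + by rewrite last_rcons.
    + rewrite -rcons_cons rcons_uniq ua andbT inE negb_or.
      by apply/andP; split; [apply: contraNneq vT => -> | apply: contra vT => /sb].
    + by rewrite size_rcons.
    + move=> w; rewrite mem_rcons inE => /predU1P[->|/sb wT].
        by rewrite !inE fv orbT.
      by rewrite inE wT.
  case/orP => [vT|]; last by rewrite inE fv.
  have [pp sz sb] := Ppath v vT; split => //; first exact: leqW.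
  by move=> w /sb wT; rewrite inE wT.
- move=> v; rewrite inE; case fv: (f v) => [x|] // _.
  case: (parent_assignmentP fP fv) => xL Gxv _.
  by move: (Gcol Gxv); rewrite (Lcol x xL); case: (col v); case: (b).
- by move=> w wu; apply: extend_paths_load fP (Lload w wu).
Qed.

Definition cumsum (s : nat -> nat) (i : nat) := \sum_(j < i.+1) s j.

(* A path to layer [i.+1] through [w] either ends at [w] or extends one of the
   paths to layer [i] through [w], each of which has at most [K i] extensions. *)
Fixpoint path_load (K : nat -> nat) (i : nat) :=
  if i is i'.+1 then K i' * path_load K i' + 1 else 0.

Lemma path_system_exists l (s K : nat -> nat) : s 0 = 1 ->
  (forall i, i < l -> forall (Tree Last : {set V}) b,
     #|Tree| <= cumsum s i -> #|Last| = s i -> (forall v, v \in Last -> col v = b) ->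
     expands_into Tree Last (K i) (s i.+1)) ->
  exists Tree Last P b, path_system l Tree Last P (path_load K l) b /\ #|Last| = s l.
Proof.
move=> s0 expand.
suff [Tree [Last [P [b [? ? _]]]]] : exists Tree Last P b,
  [/\ path_system l Tree Last P (path_load K l) b, #|Last| = s l & #|Tree| <= cumsum s l].
  by exists Tree, Last, P, b.
elim: {-2}l (leqnn l) => [_|m IH ml].
  exists [set u], [set u], (fun=> [::]), (col u); split.
  - split; [exact: set11 | exact: subxx | by move=> v /set1P ->; split => //; split
              | by move=> v /set1P -> | move=> w _].
    rewrite (_ : [set v in [set u] | w \in [::]] = set0) ?cards0 //.
    by apply/setP => v; rewrite !inE andbF.
  - by rewrite cards1 s0.
  - by rewrite cards1 /cumsum big_ord_recr big_ord0 s0.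
have [Tree [Last [P [b [PS cL cT]]]]] := IH (ltnW ml).
have [_ _ _ Lcol _] := PS.
have [f fP fcard] := parent_assignment_full (expand m ml Tree Last b cT cL Lcol).
have [PS' dis] := path_system_step PS fP.
exists (Tree :|: parented f), (parented f), (extend_paths f P), (~~ b); split => //.
by rewrite cardsU setIC (disjoint_setI0 dis) cards0 subn0 /cumsum big_ord_recr /= fcard leq_add2r.
Qed.

End PathSystem.

Section Fanout.
Variable s : nat -> nat.

(* Layer [j.+1] gets at most [fanout s j] children per vertex of layer [j],
   just enough for half of layer [j] to supply all of layer [j.+1]. *)
Definition fanout (j : nat) : nat := if j == 0 then s 1 else (2 * s j.+1) %/ s j + 1.

Lemma fanout_ge j : 0 < j -> 0 < s j -> 2 * s j.+1 <= fanout j * s j.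
Proof. by case: j => // j _ s0; rewrite /fanout addn1 ltnW // ltn_ceil. Qed.

Lemma fanout_le j : 0 < j -> fanout j * s j <= 2 * s j.+1 + s j.
Proof. by case: j => // j _; rewrite /fanout /= mulnDl mul1n leq_add2r leq_divM. Qed.

Lemma path_load_le l :
  (forall j, 0 < j < l -> s j <= s j.+1) ->
  forall j, 0 < j <= l -> path_load fanout j * s 1 <= 4 ^ j * s j.
Proof.
move=> s_mono; elim=> // j IH /andP[_ jl].
case: (posnP j) => [-> | j0]; first by rewrite /= muln0 add0n mul1n leq_pmull.
have jl' : 0 < j < l by rewrite j0; lia.
have /IH {}IH : 0 < j <= l by rewrite j0 ltnW.
have s1j : s 1 <= s j.+1.
  have s1 i : 0 < i -> i <= j.+1 -> s 1 <= s i.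
    elim: i => // i IHi _ ij; case: (posnP i) => [-> //|i0].
    by apply: leq_trans (IHi i0 (ltnW ij)) (s_mono _ _); lia.
  exact: s1.
have Kle := fanout_le j0; have sj := s_mono j jl'.
rewrite /= mulnDl mul1n -mulnA expnS.
nia.
Qed.

End Fanout.

Lemma cumsumS s i : cumsum s i.+1 = cumsum s i + s i.+1.
Proof. by rewrite /cumsum big_ord_recr. Qed.

Lemma cumsum0 s : cumsum s 0 = s 0.
Proof. by rewrite /cumsum big_ord_recr big_ord0. Qed.

Lemma cumsum_mono s : {homo cumsum s : i j / i <= j}.
Proof. by apply: homo_leq leqnn leq_trans _ => i; rewrite cumsumS leq_addr. Qed.

Local Open Scope R_scope.

Lemma INR_cumsum_le (s : nat -> nat) (M : R) i :
  (forall j, (j <= i)%N -> INR (s j) <= M) -> INR (cumsum s i) <= INR i.+1 * M.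
Proof.
elim: i => [|i IH] sM; first by rewrite cumsum0 /= Rmult_1_l; apply: sM.
rewrite cumsumS plus_INR (S_INR i.+1) Rmult_plus_distr_r Rmult_1_l.
by apply: Rplus_le_compat; [apply: IH => j ji; apply: sM; lia|apply: sM].
Qed.

Definition layer_exponent (k : nat) (e : nat -> R) (j : nat) : R :=
  if j == 0%N then 0 else if (j <= k)%N then e j else 1.

Lemma layer_exponent_eq k e j : (0 < j <= k)%N -> layer_exponent k e j = e j.
Proof. by case/andP; rewrite /layer_exponent; case: j => // j _ ->. Qed.

Section LayerExponent.
Variables (alpha beta : R) (k : nat) (e : nat -> R).
Hypotheses (k1 : (1 <= k)%N) (chain : exponent_chain alpha beta k e).

Lemma layer_exponentS j : layer_exponent k e j <= layer_exponent k e j.+1.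
Proof.
case: chain => e1_pos _ e_rec ek _; rewrite /layer_exponent /=.
case: j => [|j] /=; first by rewrite k1; lra.
case: (ltngtP j.+1 k) => [jk|kj|jk]; try lra.
  by have [] := e_rec j.+1 isT jk; lra.
by rewrite jk; lra.
Qed.

Lemma layer_exponent_mono : {homo layer_exponent k e : i j / (i <= j)%N >-> i <= j}.
Proof. exact: homo_leq Rle_refl (fun y x z => @Rle_trans x y z) layer_exponentS. Qed.

Lemma layer_exponent_ge0 j : 0 <= layer_exponent k e j.
Proof. exact: layer_exponent_mono (leq0n j). Qed.

Lemma layer_exponent_gap i : (i < k)%N ->
  beta * layer_exponent k e i.+2 < layer_exponent k e i.+1 + alpha - 1.
Proof.
case: chain => _ _ e_rec _ ek ik; rewrite /layer_exponent /= ik.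
case: (ltngtP i.+1 k) => [lt|ki|eq]; last by rewrite eq; lra.
  by have [] := e_rec i.+1 isT lt.
lia.
Qed.

End LayerExponent.

(* [rho * (sparse_scale * n) ^ (alpha - 1) = delta / 2 * n ^ (alpha - 1)]: on
   sets of at most [sparse_scale * n] vertices, the main term of the
   Zarankiewicz bound is half the minimum degree. *)
Definition sparse_scale (alpha rho delta : R) : R :=
  Rpower (delta / (2 * rho)) (/ (alpha - 1)).

(* Small enough for all [k.+2] layers together to stay below [sparse_scale * n]. *)
Definition last_density (alpha rho delta : R) (k : nat) : R :=
  Rmin 1 (sparse_scale alpha rho delta / INR (k + 3)).

Definition layer_size (k : nat) (e : nat -> R) (mu : R) (n j : nat) : nat :=
  if j == 0%N then 1%N
  else if (j <= k)%N then up_nat (Rpower (INR n) (e j)) else up_nat (mu * INR n).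

Definition large_enough (alpha beta rho delta C : R) (k : nat) (e : nat -> R) (n : nat) :=
  let nR := INR n in
  2 <= nR /\
  [/\ 3 * Rpower nR (e 1%N) <= delta * Rpower nR (alpha - 1),
      2 * Rpower nR (e k) <= last_density alpha rho delta k * nR,
      forall i, (i < k)%N ->
        Rmax C 0 * Rpower (2 * INR k.+2) beta * Rpower nR (beta * layer_exponent k e i.+2)
        <= delta / 4 * Rpower nR (layer_exponent k e i.+1 + alpha - 1),
      forall i, (i < k)%N -> (0 < i)%N -> 2 * Rpower nR (e i) <= Rpower nR (e i.+1) &
      2 * 4 ^ k.+1 * ln nR <= Rpower nR (e 1%N)].

Lemma last_density_pos alpha rho delta k : 0 < last_density alpha rho delta k.
Proof.
by apply: Rmin_pos; [lra|apply: Rdiv_lt_0_compat; [apply: Rpower_pos|apply: lt_0_INR; lia]].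
Qed.

Lemma last_density_le1 alpha rho delta k : last_density alpha rho delta k <= 1.
Proof. exact: Rmin_l. Qed.

Lemma eventually_large_enough alpha beta rho delta C k e :
  (1 <= k)%N -> exponent_chain alpha beta k e -> 0 < delta ->
  eventually (large_enough alpha beta rho delta C k e).
Proof.
move=> k1 chain d0; have [e1_pos e1_lt e_rec ek1 _] := chain.
have mu0 := last_density_pos alpha rho delta k.
have gap i : (i < k)%N -> eventually (fun n =>
    Rmax C 0 * Rpower (2 * INR k.+2) beta * Rpower (INR n) (beta * layer_exponent k e i.+2)
    <= delta / 4 * Rpower (INR n) (layer_exponent k e i.+1 + alpha - 1)).
  by move=> ik; exact: (@eventually_Rpower_lt _ _ _ (delta / 4)
                          (layer_exponent_gap k1 chain ik) ltac:(lra)).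
have grow i : (i < k)%N -> eventually (fun n =>
    (0 < i)%N -> 2 * Rpower (INR n) (e i) <= Rpower (INR n) (e i.+1)).
  case: i => [_|i ik]; first by exists 0%N.
  refine (eventually_impl (eventually_Rpower_lt 2 (proj1 (e_rec i.+1 isT ik)) Rlt_0_1) _).
  by move=> n; rewrite Rmult_1_l.
refine (eventually_impl (eventually_and (eventually_ge_INR 2)
  (eventually_and (eventually_Rpower_lt 3 e1_lt d0)
  (eventually_and (eventually_Rpower_lt 2 ek1 mu0)
  (eventually_and (eventually_forall_ltn gap)
  (eventually_and (eventually_forall_ltn grow)
                  (eventually_ln_le_Rpower (2 * 4 ^ k.+1) e1_pos)))))) _).
move=> n [n2 [? [C3 [? [? ?]]]]]; split => //; split => //.
by rewrite Rpower_1 in C3; lra.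
Qed.

Section Schedule.
Variables (alpha beta rho delta C : R) (k : nat) (e : nat -> R) (n : nat).
Hypotheses (b1 : 1 <= beta) (ba : beta < alpha) (a2 : alpha < 2).
Hypotheses (rho0 : 0 < rho) (delta0 : 0 < delta).
Hypotheses (k1 : (1 <= k)%N) (chain : exponent_chain alpha beta k e).
Hypothesis large : large_enough alpha beta rho delta C k e n.

Local Notation nR := (INR n).
Local Notation mu := (last_density alpha rho delta k).
Local Notation s := (layer_size k e mu n).
Local Notation E := (layer_exponent k e).

Let n2 : 2 <= nR. Proof. by case: large. Qed.

Let Rpower_n_ge1 a : 0 <= a -> 1 <= Rpower nR a.
Proof. by apply: Rpower_ge1; lra. Qed.

Let Rpower_n_mono a b : a <= b -> Rpower nR a <= Rpower nR b.
Proof. by apply: Rle_Rpower; lra. Qed.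

Lemma layer_size_bounds j : (0 < j <= k)%N ->
  Rpower nR (e j) < INR (s j) <= Rpower nR (e j) + 1.
Proof.
case/andP; rewrite /layer_size; case: j => // j _ -> /=.
by apply: up_nat_spec; apply: Rlt_le; apply: Rpower_pos.
Qed.

Lemma last_layer_bounds : mu * nR < INR (s k.+1) <= mu * nR + 1.
Proof.
rewrite /layer_size /= ltnn; apply: up_nat_spec.
by apply: Rmult_le_pos; [apply: Rlt_le; apply: last_density_pos|apply: pos_INR].
Qed.

Lemma layer_size_pos j : (0 < s j)%N.
Proof.
rewrite /layer_size; case: (j == 0%N) => //; case: (j <= k)%N; apply: up_nat_gt0.
- by apply: Rlt_le; apply: Rpower_pos.
- by apply: Rmult_le_pos; [apply: Rlt_le; apply: last_density_pos|apply: pos_INR].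
Qed.

Lemma layer_size_le j : (j <= k.+1)%N -> INR (s j) <= 2 * Rpower nR (E j).
Proof.
move=> jl; case: (posnP j) => [->|j0].
  by rewrite /= /layer_exponent /= Rpower_O; lra.
case: (leqP j k) => jk.
  have jk' : (0 < j <= k)%N by rewrite j0.
  rewrite layer_exponent_eq //; have := layer_size_bounds jk'.
  have := Rpower_n_ge1 (layer_exponent_ge0 k1 chain j); rewrite layer_exponent_eq //; lra.
have -> : j = k.+1 by lia.
rewrite /layer_exponent /= ltnn Rpower_1; last lra.
have := last_layer_bounds; have := last_density_le1 alpha rho delta k; nra.
Qed.

Lemma layer_size_le_mu j : (j <= k)%N -> INR (s j) <= mu * nR.
Proof.
move=> jk; case: large => _ [_ C3 _ _ _].
apply: Rle_trans (layer_size_le (leqW jk)) _; apply: Rle_trans C3.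
rewrite -(@layer_exponent_eq k e k) ?k1 ?leqnn //.
by apply: Rmult_le_compat_l; [lra|exact: Rpower_n_mono (layer_exponent_mono k1 chain jk)].
Qed.

Lemma mu_n_ge1 : 1 <= mu * nR.
Proof. by apply: Rle_trans (layer_size_le_mu (leq0n k)); rewrite /= /layer_size /=; lra. Qed.

Lemma layer_size_mono j : (0 < j < k.+1)%N -> (s j <= s j.+1)%N.
Proof.
case/andP => j0; rewrite ltnS leq_eqVlt => /orP[/eqP -> | jk]; apply/leP; apply: INR_le.
  by have := layer_size_le_mu (leqnn k); have := last_layer_bounds; lra.
have [lo _] := layer_size_bounds (j := j.+1) ltac:(lia).
have [_ hi] := layer_size_bounds (j := j) ltac:(lia).
case: large => _ [_ _ _ C5 _]; have := C5 j jk j0.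
have := Rpower_n_ge1 (layer_exponent_ge0 k1 chain j); rewrite layer_exponent_eq; [lra|lia].
Qed.

Lemma cumsum_layer_size_le_scale : INR (cumsum s k.+1) <= sparse_scale alpha rho delta * nR.
Proof.
rewrite cumsumS plus_INR.
have := INR_cumsum_le layer_size_le_mu; have := last_layer_bounds; have := mu_n_ge1.
have : mu * INR (k + 3) <= sparse_scale alpha rho delta.
  have : mu <= sparse_scale alpha rho delta / INR (k + 3) := Rmin_r _ _.
  have k3 : 0 < INR (k + 3) by apply: lt_0_INR; lia.
  by move/(Rmult_le_compat_r _ _ _ (Rlt_le _ _ k3)); rewrite /Rdiv Rmult_assoc Rinv_l; lra.
rewrite (_ : INR (k + 3) = INR k + 3) ?S_INR; last by rewrite plus_INR /=; lra.
have := pos_INR k; nra.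
Qed.

Lemma cumsum_layer_size_le i : (i <= k)%N ->
  INR (cumsum s i.+1) <= INR k.+2 * (2 * Rpower nR (E i.+1)).
Proof.
move=> ik.
have le j : (j <= i.+1)%N -> INR (s j) <= 2 * Rpower nR (E i.+1).
  move=> ji; apply: Rle_trans (layer_size_le _) _; first lia.
  by apply: Rmult_le_compat_l; [lra|exact: Rpower_n_mono (layer_exponent_mono k1 chain ji)].
apply: Rle_trans (INR_cumsum_le le) _; apply: Rmult_le_compat_r.
  by have := Rpower_pos nR (E i.+1); lra.
by apply: INR_leq; lia.
Qed.

Lemma first_layer_lt_deg : INR (s 1%N) + 1 <= delta * Rpower nR (alpha - 1).
Proof.
have [_ hi] := layer_size_bounds (j := 1) ltac:(lia).
have := Rpower_n_ge1 (layer_exponent_ge0 k1 chain 1); rewrite layer_exponent_eq //.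
by case: large => _ [C2 _ _ _ _]; lra.
Qed.

Lemma zarankiewicz_terms_lt i x : (0 < i <= k)%N -> INR (s i) < 2 * x ->
  rho * x * Rpower (INR (cumsum s i.+1)) (alpha - 1)
    + Rmax C 0 * Rpower (INR (cumsum s i.+1)) beta
  < x * (delta * Rpower nR (alpha - 1)).
Proof.
move=> ik sx; set T := INR (cumsum s i.+1).
have T1 : 1 <= T.
  apply: Rle_trans (_ : INR (s i.+1) <= T); last by apply: INR_leq; rewrite cumsumS leq_addl.
  by apply: (INR_leq (a := 1)); apply: layer_size_pos.
have [lo _] := layer_size_bounds ik.
have x0 : 0 < x by have := Rpower_pos nR (e i); lra.
have p0 := Rpower_pos nR (alpha - 1).
have main : rho * Rpower T (alpha - 1) <= delta / 2 * Rpower nR (alpha - 1).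
  have Tc : T <= sparse_scale alpha rho delta * nR.
    apply: Rle_trans cumsum_layer_size_le_scale; apply: INR_leq; apply: cumsum_mono; lia.
  have : Rpower T (alpha - 1) <= Rpower (sparse_scale alpha rho delta * nR) (alpha - 1).
    by apply: Rle_Rpower_l; lra.
  rewrite -Rpower_mult_distr; try lra; last by apply: Rpower_pos.
  rewrite /sparse_scale Rpower_mult Rinv_l ?Rpower_1; try lra; last first.
    by apply: Rdiv_lt_0_compat; lra.
  move/(Rmult_le_compat_l rho) => /(_ (Rlt_le _ _ rho0)).
  by rewrite (_ : rho * (delta / (2 * rho) * Rpower nR (alpha - 1)) =
                  delta / 2 * Rpower nR (alpha - 1)) //; field; lra.
have minor : Rmax C 0 * Rpower T beta <= delta / 4 * Rpower nR (e i) * Rpower nR (alpha - 1).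
  have : Rpower T beta <= Rpower (INR k.+2 * (2 * Rpower nR (E i.+1))) beta.
    by apply: Rle_Rpower_l; [lra|split; [lra|apply: cumsum_layer_size_le; lia]].
  rewrite -Rmult_assoc -Rpower_mult_distr; last by apply: Rpower_pos.
  2: by apply: Rmult_lt_0_compat; [apply: lt_0_INR; lia|lra].
  rewrite Rpower_mult (Rmult_comm _ beta).
  move/(Rmult_le_compat_l (Rmax C 0) _ _ (Rmax_r C 0)); rewrite -Rmult_assoc => h.
  apply: Rle_trans h _; case: large => _ [_ _ C4 _ _]; move: (C4 i.-1 ltac:(lia)).
  rewrite prednK; last lia.
  by rewrite (Rmult_comm (INR k.+2)) (layer_exponent_eq e ik) /Rminus Rplus_assoc Rpower_plus; lra.
have sp : Rpower nR (e i) * Rpower nR (alpha - 1) < 2 * x * Rpower nR (alpha - 1).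
  by apply: Rmult_lt_compat_r; lra.
have : rho * x * Rpower T (alpha - 1) <= x * (delta / 2 * Rpower nR (alpha - 1)).
  by rewrite (Rmult_comm rho) Rmult_assoc; apply: Rmult_le_compat_l; lra.
nra.
Qed.

Lemma path_load_le_n_ln : INR (path_load (fanout s) k.+1) <= nR / ln nR.
Proof.
set B := INR (path_load (fanout s) k.+1).
have := INR_leq (path_load_le layer_size_mono (j := k.+1) ltac:(lia)).
rewrite !mult_INR INR_expn (_ : INR 4 = 4) /=; last by rewrite /=; lra.
move=> loadB.
have [lo1 _] := layer_size_bounds (j := 1) ltac:(lia).
have [_ hil] := last_layer_bounds.
have lnn : 0 < ln nR by rewrite -ln_1; apply: ln_increasing; lra.
have p4 : 0 < 4 * 4 ^ k by apply: Rmult_lt_0_compat; [lra|apply: pow_lt; lra].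
have B0 : 0 <= B := pos_INR _.
case: large => _ [_ _ _ _ C6]; rewrite /= in C6.
have : B * (2 * (4 * 4 ^ k) * ln nR) <= (4 * 4 ^ k) * (2 * nR).
  apply: Rle_trans (_ : B * INR (s 1%N) <= _); first by apply: Rmult_le_compat_l; lra.
  apply: Rle_trans loadB _; apply: Rmult_le_compat_l; first lra.
  by have := last_density_le1 alpha rho delta k; nra.
move=> h; apply: (Rmult_le_reg_r (ln nR)) => //.
rewrite /Rdiv Rmult_assoc Rinv_l; nra.
Qed.

Variables (F : graph_family) (V : finType) (G : rel V) (col : V -> bool) (D : nat).
Hypotheses (Gsym : symmetric G) (Gfree : F_free F G).
Hypothesis Gcol : forall x y, G x y -> col x != col y.
Hypothesis zarank_le : forall m m' : nat, (0 < m)%N -> (m <= m')%N ->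
  INR (zarank m m' F) <= rho * INR m * Rpower (INR m') (alpha - 1) + C * Rpower (INR m') beta.
Hypotheses (deg_ge : forall v, (D <= deg G v)%N) (D_ge : delta * Rpower nR (alpha - 1) <= INR D).

Lemma layers_expand i (Tree Last : {set V}) b : (i < k.+1)%N ->
  (#|Tree| <= cumsum s i)%N -> #|Last| = s i -> (forall v, v \in Last -> col v = b) ->
  expands_into G Tree Last (fanout s i) (s i.+1).
Proof.
move=> il cT cL Lcol U UL; rewrite cL => small; rewrite leqNgt; apply/negP => few.
have NU : (#|nbr G U| < cumsum s i.+1)%N.
  have := subset_leq_card (subsetIr (nbr G U) Tree).
  by rewrite cumsumS; move: few; rewrite cardsD; lia.
have UT : (#|U| <= cumsum s i.+1)%N.
  apply: leq_trans (subset_leq_card UL) _; rewrite cL cumsumS.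
  by rewrite /cumsum big_ord_recr /=; lia.
case: (posnP i) => [i0 | i0].
  subst i; rewrite /fanout /= in small.
  have [x xU] : exists x, x \in U.
    by apply/set0Pn; rewrite -card_gt0; move: small; case: #|U| => //; rewrite muln1 ltnn.
  have := first_layer_lt_deg; have := INR_leq (leq_trans (deg_ge x) (deg_le_card_nbr G xU)).
  have := INR_leq NU; rewrite cumsumS cumsum0 plus_INR S_INR /=; lra.
have Ui : (s i < 2 * #|U|)%N.
  have := fanout_ge i0 (layer_size_pos i); have := subset_leq_card UL; rewrite cL; nia.
have Ui' : INR (s i) < 2 * INR #|U|.
  by have := INR_leq Ui; rewrite mult_INR [INR 2]/= S_INR; lra.
have := zarankiewicz_terms_lt (i := i) ltac:(lia) Ui'.
have a0 : 0 <= alpha - 1 by lra.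
have b0 : 0 <= beta by lra.
have := sum_deg_le_zarankiewicz (Rlt_le _ _ rho0) a0 b0
  zarank_le Gsym Gfree (nbr_disjoint Gcol (fun v vU => Lcol v (subsetP UL v vU)))
  (INR_leq UT) (INR_leq (ltnW NU)).
have : (#|U| * D <= \sum_(x in U) deg G x)%N.
  by rewrite -sum_nat_const; apply: leq_sum => x _.
move/INR_leq; rewrite mult_INR.
have : INR #|U| * (delta * Rpower nR (alpha - 1)) <= INR #|U| * INR D.
  by apply: Rmult_le_compat_l; [apply: pos_INR|].
lra.
Qed.

End Schedule.

Theorem mainTheorem5 (alpha beta rho delta : R) :
  (1 <= beta) -> (beta < alpha) -> (alpha < 2) -> (0 < rho) -> (0 < delta) ->
  exists mu' : R, (0 < mu') /\
  forall (F : graph_family) (C : R),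
    (forall k (H : rel 'I_k), F k H -> bipartite_graph H) ->
    (forall m n : nat, (0 < m)%N -> (m <= n)%N ->
       (INR (zarank m n F) <= rho * INR m * Rpower (INR n) (alpha - 1) + C * Rpower (INR n) beta)) ->
    exists N : nat, forall n : nat, (N <= n)%N ->
    forall (V : finType) (G : rel V),
      bipartite_graph G -> F_free F G -> (#|V| <= n)%N ->
      (forall v : V, (delta * Rpower (INR n) (alpha - 1) <= INR #|[set w | G v w]|)) ->
      forall u : V,
      exists (S : {set V}) (P : V -> seq V),
        (mu' * INR n <= INR #|S|) /\
        (forall v, v \in S -> is_path_from_to G u v (P v) /\
                              (Z.of_nat (size (P v)) <= ell0 alpha beta)%Z) /\
        (forall w, w != u -> (INR #|[set v in S | w \in P v]| <= INR n / ln (INR n))).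
Proof.
move=> b1 ba a2 rho0 delta0.
have [k [k1 [k_ell0 [e chain]]]] := exponent_chain_exists b1 ba a2.
exists (last_density alpha rho delta k); split; first exact: last_density_pos.
move=> F C _ zarank_le.
have [N large] := eventually_large_enough rho C k1 chain delta0.
exists N => n /large {}large V G [[Gsym _] [col Gcol]] Gfree _ deg_ge u.
have [x0 _ x0_min] := arg_minnP (deg G) (isT : xpredT u).
have expand := layers_expand b1 ba a2 rho0 delta0 k1 chain large Gsym Gfree Gcol zarank_le
  (fun v => x0_min v isT) (deg_ge x0).
have [Tree [Last [P [b [[_ LT Ppath _ load] cL]]]]] :=
  path_system_exists u Gcol (erefl 1%N) (fun i il Tree Last b => expand i Tree Last b il).
exists Last, P; split; [|split].
- by rewrite cL; have [lo _] := last_layer_bounds alpha rho delta k e n; lra.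
- by move=> v /(subsetP LT) /Ppath [pa sz _]; split => //; lia.
- move=> w wu; apply: Rle_trans (INR_leq (load w wu)) _.
  exact: path_load_le_n_ln b1 ba a2 k1 chain large.
Qed.
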